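(* Let $n\geq 2$. For $k\in\mathbb{N}$ let $\mathbb{D}_k:=\{2^{-j}:0\leq j\leq k\}$, $\alpha_k:=2^{-nk}$, and $$\mathscr{R}_k:=\Big\{[0,s_1]\times\cdots\times[0,s_{n-1}]\times\Big[0,\frac{\alpha_k}{s_1\cdots s_{n-1}}\Big] : s_1,\dots,s_{n-1}\in\mathbb{D}_k\Big\},$$ and $\mathscr{R}:=\bigcup_{k\in\mathbb{N}}\mathscr{R}_k$. Then for every Orlicz function $\Phi$ with $\Phi=o(\Phi_{n-1})$ at $\infty$, the maximal operator $M_{\mathscr{R}}$ does not satisfy a weak $L^\Phi$ inequality.
   Context: For a family $\mathscr{R}$ of standard rectangles and measurable $f$, $M_{\mathscr{R}}f(x):=\sup\{\frac{1}{|R|}\int_{\tau(R)}|f| : R\in\mathscr{R},\ \tau \text{ a translation},\ x\in\tau(R)\}$, with $|\cdot|$ Lebesgue measure. An Orlicz function is a convex increasing $\Phi:[0,\infty)\to[0,\infty)$ with $\Phi(0)=0$; $L^\Phi(\mathbb{R}^n)$ is the set of measurable $f$ with $\Phi(|f|)\in L^1$. $M_{\mathscr{R}}$ satisfies a weak $L^\Phi$ inequality if there is $C>0$ such that $|\{M_{\mathscr{R}}f>\lambda\}|\leq\int_{\mathbb{R}^n}\Phi(C|f|/\lambda)$ for all $\lambda>0$ and all $f\in L^\Phi(\mathbb{R}^n)$. For $d>0$, $\Phi_d(t):=t(1+\log_+^d t)$, where $\log_+t=\max(\log t,0)$. *)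

From HB Require Import structures.
From mathcomp Require Import all_boot all_order all_algebra.
From mathcomp Require Import all_classical all_reals all_analysis.
Unset Printing Implicit Defensive.
Import Order.TTheory GRing.Theory Num.Theory.
Local Open Scope ring_scope.
Local Open Scope classical_set_scope.

Record mspace (R : realType) := MS {
  disp : measure_display;
  car : measurableType disp;
  meas : {measure set car -> \bar R} }.
Arguments MS {R disp car} meas.
Arguments disp {R} m.
Arguments car {R} m.
Arguments meas {R} m.

(* [Rsp R k] is R^(k+1), realised as nested pairs
   (((x_0, x_1), x_2), ..., x_k), equipped with the iterated product of
   the one-dimensional Lebesgue measure (which on Borel sets is the
   (k+1)-dimensional Lebesgue measure). Coordinate i (0-based) is the
   component added at stage i. *)
Fixpoint Rsp (R : realType) (k : nat) : mspace R :=
  match k with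
  | 0 => MS (lebesgue_measure : {measure set (measurableTypeR R) -> \bar R})
  | k'.+1 => @MS R _ (car (Rsp R k') * measurableTypeR R)%type
       (((meas (Rsp R k')) \x
          (lebesgue_measure : {sigma_finite_measure set (measurableTypeR R) -> \bar R}))%E
        : {measure set _ -> \bar R})
  end.

(* R^n for n >= 1 *)
Definition Rn (R : realType) (n : nat) : mspace R := Rsp R n.-1.
Definition leb (R : realType) (n : nat) := meas (Rn R n).

Fixpoint tbox (R : realType) (k : nat) (a l : nat -> R) : set (car (Rsp R k)) :=
  match k return set (car (Rsp R k)) with
  | 0 => fun x => (a 0%N <= (x : R) <= a 0%N + l 0%N)
  | k'.+1 => fun x => @tbox R k' a l x.1 /\
                      (a k'.+1 <= (x.2 : R) <= a k'.+1 + l k'.+1)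
  end.
Arguments tbox {R} k a l.

Definition srect (R : realType) (n : nat) (l : nat -> R) : set (car (Rn R n)) :=
  tbox n.-1 (fun _ => 0) l.
Definition trect (R : realType) (n : nat) (a l : nat -> R) : set (car (Rn R n)) :=
  tbox n.-1 a l.

Arguments srect {R} n l.
Arguments trect {R} n a l.

(** Maximal operator associated with a family [F] of standard rectangles
    (each rectangle given by its vector of side lengths):
    M_F f (x) = sup { |R|^-1 \int_{tau(R)} |f| : R in F, tau translation,
                       x in tau(R) }. *)
Definition maxop (R : realType) (n : nat) (F : set (nat -> R))
    (f : car (Rn R n) -> R) (x : car (Rn R n)) : \bar R :=
  ereal_sup [set v : \bar R | exists (l a : nat -> R),
     [/\ F l, trect n a l x &
      v = (((fine (leb R n (srect n l)))^-1)%:E *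
          \int[leb R n]_(y in trect n a l) (`|f y|)%:E)%E]].

(** Orlicz functions: convex, (non-strictly) increasing on [0, oo), Phi 0 = 0.
    Only the restriction of Phi to [0, oo) matters. *)
Definition orlicz (R : realType) (Phi : R -> R) : Prop :=
  [/\ Phi 0 = 0,
      (forall x y : R, 0 <= x -> x <= y -> Phi x <= Phi y) &
      (forall (x y t : R), 0 <= x -> 0 <= y -> 0 <= t <= 1 ->
         Phi (t * x + (1 - t) * y) <= t * Phi x + (1 - t) * Phi y)].

Definition logp (R : realType) (t : R) : R := Num.max (ln t) 0.
Arguments orlicz {R} Phi.
Arguments logp {R} t.

Definition Phid (R : realType) (d : nat) (t : R) : R := t * (1 + (logp t) ^+ d).

Definition weak_Lphi (R : realType) (n : nat) (F : set (nat -> R))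
    (Phi : R -> R) : Prop :=
  exists C : R, 0 < C /\
    forall (lam : R) (f : car (Rn R n) -> R), 0 < lam ->
      measurable_fun setT f ->
      (leb R n).-integrable setT (fun x => (Phi `|f x|)%:E) ->
      (leb R n [set x | lam%:E < maxop R n F f x] <=
        \int[leb R n]_x (Phi (C * `|f x| / lam))%:E)%E.
Arguments weak_Lphi {R} n F Phi.

Definition Dk (R : realType) (k : nat) (s : R) : Prop :=
  exists j : nat, (j <= k)%N /\ s = (2 ^+ j)^-1.
Definition alpha (R : realType) (n k : nat) : R := (2 ^+ (n * k))^-1.
(* side-length vectors of rectangles in R_k: sides s_1..s_{n-1} in D_k
   (coordinates 0..n-2) and last side alpha_k / (s_1 ... s_{n-1}) *)
Definition calRk (R : realType) (n k : nat) : set (nat -> R) :=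
  [set l | (forall i : nat, (i < n.-1)%N -> Dk R k (l i)) /\
           l n.-1 = alpha R n k / \prod_(i < n.-1) l i].
Definition calR (R : realType) (n : nat) : set (nat -> R) :=
  \bigcup_(k in [set: nat]) calRk R n k.

Definition little_o_infty (R : realType) (Phi Psi : R -> R) : Prop :=
  Phi x / Psi x @[x --> +oo] --> 0.
Arguments little_o_infty {R} Phi Psi.

(* Test the weak inequality at height 1 on f = 2 Z 1_Q, where
   Q = [0, 2^-k]^(n-1) x [0, alpha_k] and Z = 2^(k(n-1)), so that |Q| = alpha_k / Z.
   Let phi_k = sum_(j < k) 2^j 1_(2^-(j+1), 2^-j] and G(y) = phi_k(y_1) ... phi_k(y_(n-1)).
   If G(y) > 0, each y_i lies in some (2^-(j_i+1), 2^-j_i] with j_i < k, and the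
   rectangle of R_k with sides 2^-j_i contains Q and every (y, t) with
   0 <= t <= alpha_k G(y); since f averages 2 over it, M f > 1 on the region under
   alpha_k G, whose measure is alpha_k (int phi_k)^(n-1) = alpha_k (k/2)^(n-1).
   The weak inequality with constant C thus gives Phi(2 C Z) >= Z (k/2)^(n-1),
   i.e. Phi(T) >= c T log^(n-1) T along T = 2 C 2^(k(n-1)) -> oo, which is
   incompatible with Phi = o(Phi_(n-1)). *)

From HB Require Import structures.
From mathcomp Require Import all_boot all_order all_algebra.
From mathcomp Require Import all_classical all_reals all_analysis.
From mathcomp Require Import measurable_realfun ring lra.
Import Order.TTheory GRing.Theory Num.Theory.
Local Open Scope ring_scope.
Local Open Scope classical_set_scope.

Definition lebesgue1 (R : realType) :
  {sigma_finite_measure set (measurableTypeR R) -> \bar R} := lebesgue_measure.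

Lemma sigma_finite_Rsp (R : realType) p : sigma_finite setT (meas (Rsp R p)).
Proof.
elim: p => [|p IH]; first exact: (sigma_finiteT (lebesgue1 R)).
have /sigma_finiteP[F [TF ndF Foo]] := IH.
have /sigma_finiteP[G [TG ndG Goo]] := sigma_finiteT (lebesgue1 R).
exists (fun n => F n `*` G n).
  rewrite -setXTT TF TG predeqE => -[x y]; split.
    move=> [/= [i _ Fix] [j _ Gjy]]; exists (maxn i j) => //; split.
    - by move: x Fix; exact/subsetPset/ndF/leq_maxl.
    - by move: y Gjy; exact/subsetPset/ndG/leq_maxr.
  by move=> [i _ []/= ? ?]; split; exists i.
move=> i; have [? ?] := Foo i; have [? ?] := Goo i.
split; first exact: measurableX.
rewrite /= (product_measure1E (meas (Rsp R p)) (lebesgue1 R))//.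
by rewrite lte_mul_pinfty// ge0_fin_numE.
Qed.

(* [meas (Rsp R p)] with its sigma-finiteness registered, for Fubini's theorem *)
Definition Rsp_measure (R : realType) p : set (car (Rsp R p)) -> \bar R :=
  meas (Rsp R p).
HB.instance Definition _ R p := Measure.on (Rsp_measure R p).
HB.instance Definition _ R p :=
  Measure_isSigmaFinite.Build _ _ _ (Rsp_measure R p) (sigma_finite_Rsp R p).

Section Boxes.
Variable R : realType.

Lemma le_lebesgue_measure : {homo @lebesgue_measure R : A B / A `<=` B >-> (A <= B)%E}.
Proof.
move=> A B AB; rewrite /lebesgue_measure /lebesgue_stieltjes_measure.
by rewrite /measure_extension; exact: le_mu_ext.
Qed.

(* No measurability is needed: the integral of a nonnegative function is the
   supremum of the integrals of its simple minorants. *)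
Lemma ge0_le_integralT d (T : measurableType d) (mu : {measure set T -> \bar R})
    (f g : T -> \bar R) : (forall x, (0 <= f x)%E) -> (forall x, (f x <= g x)%E) ->
  (\int[mu]_x f x <= \int[mu]_x g x)%E.
Proof.
move=> f0 fg; rewrite !ge0_integralTE//; last by move=> x; exact: le_trans (f0 x) (fg x).
by apply: ereal_sup_le => _ [h hf <-]; exists h => //= x; exact: le_trans (hf x) (fg x).
Qed.

(* Monotonicity for arbitrary sets: level sets of maximal functions are not
   known to be measurable. *)
Lemma le_Rsp_measure p (A B : set (car (Rsp R p))) :
  A `<=` B -> (meas (Rsp R p) A <= meas (Rsp R p) B)%E.
Proof.
elim: p A B => [|p IH] A B AB; first exact: le_lebesgue_measure.
apply: ge0_le_integralT => x /=; first exact: measure_ge0.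
by apply: le_lebesgue_measure => y; rewrite /xsection /= !inE; exact: AB.
Qed.

Lemma lebesgue_measure_itv_len (a l : R) : 0 <= l ->
  lebesgue_measure (`[a, a + l]%classic : set R) = l%:E.
Proof.
move=> l0; rewrite lebesgue_measure_itv /= -EFinD addrAC subrr add0r.
case: ltP => // h; congr (_%:E); apply/eqP; rewrite eq_le l0 /=.
by rewrite -(lerD2l a) addr0.
Qed.

Lemma tbox0E (a l : nat -> R) : tbox 0 a l = `[a 0%N, a 0%N + l 0%N]%classic.
Proof. by apply/seteqP; split => x; rewrite /= in_itv. Qed.

Lemma tboxSE k (a l : nat -> R) :
  tbox k.+1 a l = tbox k a l `*` `[a k.+1, a k.+1 + l k.+1]%classic.
Proof. by apply/seteqP; split => x; rewrite /= in_itv. Qed.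

Lemma measurable_tbox k (a l : nat -> R) : measurable (tbox k a l).
Proof.
elim: k => [|k IH]; first by rewrite tbox0E; exact: measurable_itv.
by rewrite tboxSE; apply: measurableX => //; exact: measurable_itv.
Qed.

Lemma Rsp_measure_tbox k (a l : nat -> R) : (forall i, (i <= k)%N -> 0 <= l i) ->
  meas (Rsp R k) (tbox k a l) = (\prod_(i < k.+1) l i)%:E.
Proof.
elim: k => [|k IH] l0.
  by rewrite tbox0E big_ord1; apply: lebesgue_measure_itv_len; exact: l0.
rewrite tboxSE.
transitivity ((meas (Rsp R k) \x lebesgue1 R)%E
  (tbox k a l `*` `[a k.+1, a k.+1 + l k.+1]%classic)); first by [].
rewrite product_measure1E; [|exact: measurable_tbox|exact: measurable_itv].
rewrite IH; last by move=> i ik; apply: l0; exact: leqW.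
rewrite (_ : lebesgue1 R _ = (l k.+1)%:E); last by apply: lebesgue_measure_itv_len; exact: l0.
by rewrite [in RHS]big_ord_recr /= EFinM.
Qed.

Lemma eq_tbox k (a l l' : nat -> R) : (forall i, (i <= k)%N -> l i = l' i) ->
  tbox k a l = tbox k a l'.
Proof.
elim: k => [|k IH] h /=; first by rewrite h.
by rewrite IH ?h// => i ik; apply: h; exact: leqW.
Qed.

Lemma subset_tbox k (a l l' : nat -> R) : (forall i, (i <= k)%N -> l i <= l' i) ->
  tbox k a l `<=` tbox k a l'.
Proof.
elim: k => [|k IH] h /= x.
  by move=> /andP[h1 h2]; rewrite h1 /= (le_trans h2) // lerD2l h.
move=> [h1 /andP[h2 h3]]; split.
  by apply: IH h1 => i ik; apply: h; exact: leqW.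
by rewrite h2 /= (le_trans h3) // lerD2l h.
Qed.

End Boxes.

Section DyadicWeight.
Variable R : realType.

Lemma le_inv_pow2 i j : (i <= j)%N -> ((2:R) ^+ j)^-1 <= ((2:R) ^+ i)^-1.
Proof. by move=> ij; rewrite lef_pV2 ?posrE ?exprn_gt0 // ler_eXn2l // ltr1n. Qed.

Definition dyadic_itv (j : nat) : set R :=
  `]((2:R) ^+ j.+1)^-1, ((2:R) ^+ j)^-1]%classic.

Lemma lebesgue_measure_dyadic_itv j :
  lebesgue_measure (dyadic_itv j) = ((2:R) ^+ j.+1)^-1%:E.
Proof.
rewrite /dyadic_itv lebesgue_measure_itv /= ifT; last first.
  by rewrite lte_fin ltf_pV2 ?posrE ?exprn_gt0// exprS ltr_pMl ?exprn_gt0// ltr1n.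
rewrite -EFinD; congr (_%:E); rewrite exprS invfM.
have h : (2:R) ^+ j != 0 by rewrite expf_neq0.
by field.
Qed.

Lemma dyadic_itv_inj i j t : t \in dyadic_itv i -> t \in dyadic_itv j -> i = j.
Proof.
wlog ij : i j / (i <= j)%N.
  by move=> H ti tj; case/orP: (leq_total i j) => h; [exact: H|apply/esym; exact: H].
rewrite /dyadic_itv !inE /= !in_itv /= => /andP[ti _] /andP[_ tj].
apply/eqP; rewrite eqn_leq ij leqNgt; apply/negP => /le_inv_pow2 ji.
by have := lt_le_trans ti (le_trans tj ji); rewrite ltxx.
Qed.

Definition dyadic_weight (k : nat) (t : R) : R :=
  \sum_(j < k) (2:R) ^+ j * \1_(dyadic_itv j) t.

Lemma dyadic_weight_ge0 k t : 0 <= dyadic_weight k t.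
Proof. by apply: sumr_ge0 => j _; rewrite mulr_ge0 // exprn_ge0. Qed.

Lemma measurable_dyadic_weight k : measurable_fun setT (dyadic_weight k).
Proof.
apply: measurable_sum => j; apply: measurable_funM; first exact: measurable_cst.
by apply: measurable_indic; exact: measurable_itv.
Qed.

Lemma integral_dyadic_weight k :
  (\int[lebesgue1 R]_t (dyadic_weight k t)%:E = (k%:R / 2)%:E)%E.
Proof.
under eq_integral do rewrite /dyadic_weight -sumEFin.
rewrite ge0_integral_sum //; last first.
  move=> j; apply/measurable_EFinP; apply: measurable_funM.
    exact: measurable_cst.
  by apply: measurable_indic; exact: measurable_itv.
under eq_bigr => j _.
  under eq_integral do rewrite EFinM.
  rewrite ge0_integralZl_EFin //; last first.
    by apply/measurable_EFinP; apply: measurable_indic; exact: measurable_itv.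
  rewrite integral_indic //= ?setIT; last exact: measurable_itv.
  rewrite (_ : (_ * _)%E = ((2:R) ^+ j)%:E * ((2:R) ^+ j.+1)^-1%:E)%E; last first.
    by congr (_ * _)%E; exact: lebesgue_measure_dyadic_itv.
  rewrite -EFinM (_ : _ * _ = 2^-1); last first.
    have h : (2:R) ^+ j != 0 by rewrite expf_neq0.
    by rewrite exprS invfM; field.
  over.
by rewrite /= sumEFin sumr_const card_ord mulr_natl.
Qed.

Lemma dyadic_weight_gt0 k t : 0 < dyadic_weight k t ->
  exists j, [/\ (j < k)%N, t \in dyadic_itv j & dyadic_weight k t = 2 ^+ j].
Proof.
move=> wt.
have [[j tj]|] := pselect (exists j : 'I_k, t \in dyadic_itv j); last first.
  move=> nj; suff w0 : dyadic_weight k t = 0 by move: wt; rewrite w0 ltxx.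
  apply: big1 => j _; rewrite indicE; case: (boolP (t \in _)) => tj.
    by exfalso; apply: nj; exists j.
  by rewrite mulr0.
exists j; split => //.
rewrite /dyadic_weight (bigD1 j) //= big1 ?addr0; first by rewrite indicE tj mulr1.
move=> i ij; rewrite indicE; case: (boolP (t \in _)) => ti; last by rewrite mulr0.
by move: ij; rewrite (ord_inj (@dyadic_itv_inj i j t ti tj)) eqxx.
Qed.

Fixpoint tensor_weight (k p : nat) : car (Rsp R p) -> R :=
  match p return car (Rsp R p) -> R with
  | 0 => dyadic_weight k
  | p'.+1 => fun z => tensor_weight k p' z.1 * dyadic_weight k z.2
  end.

Lemma tensor_weight_ge0 k p y : 0 <= tensor_weight k p y.
Proof.
elim: p y => [|p IH] y /=; first exact: dyadic_weight_ge0.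
by rewrite mulr_ge0 // dyadic_weight_ge0.
Qed.

Lemma measurable_tensor_weight k p : measurable_fun setT (tensor_weight k p).
Proof.
elim: p => [|p IH] /=; first exact: measurable_dyadic_weight.
apply: measurable_funM; first exact: measurableT_comp IH measurable_fst.
exact: measurableT_comp (measurable_dyadic_weight k) measurable_snd.
Qed.

Lemma integral_tensor_weight k p :
  (\int[Rsp_measure R p]_y (tensor_weight k p y)%:E = ((k%:R / 2) ^+ p.+1)%:E)%E.
Proof.
elim: p => [|p IH]; first by rewrite expr1; exact: integral_dyadic_weight.
have mG := measurable_tensor_weight k p.
have mw := measurable_dyadic_weight k.
transitivity (\int[(Rsp_measure R p \x lebesgue1 R)%E]_z
  (tensor_weight k p z.1 * dyadic_weight k z.2)%:E)%E; first by [].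
rewrite fubini_tonelli1 //; last 2 first.
- apply/measurable_EFinP; apply: measurable_funM.
    exact: measurableT_comp mG measurable_fst.
  exact: measurableT_comp mw measurable_snd.
- by move=> z; rewrite lee_fin mulr_ge0 // ?tensor_weight_ge0 ?dyadic_weight_ge0.
rewrite /fubini_F /=.
under eq_integral => y _.
  under eq_integral do rewrite EFinM.
  rewrite ge0_integralZl_EFin ?integral_dyadic_weight ?tensor_weight_ge0 //; last 2 first.
  - by move=> t _; rewrite lee_fin dyadic_weight_ge0.
  - exact/measurable_EFinP.
  over.
rewrite /= ge0_integralZr //; last 2 first.
- exact/measurable_EFinP.
- by move=> y _; rewrite lee_fin tensor_weight_ge0.
by rewrite IH -EFinM [in RHS]exprS mulrC.
Qed.

Definition subgraph (k p : nat) (a : R) : set (car (Rsp R p.+1)) :=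
  [set z | 0 < tensor_weight k p z.1 /\ 0 <= z.2 <= a * tensor_weight k p z.1].

Lemma measure_subgraph k p a : 0 <= a ->
  meas (Rsp R p.+1) (subgraph k p a) = (a * (k%:R / 2) ^+ p.+1)%:E.
Proof.
move=> a0.
transitivity (product_measure1 (meas (Rsp R p)) (lebesgue1 R) (subgraph k p a)).
  by [].
transitivity (\int[Rsp_measure R p]_y (a * tensor_weight k p y)%:E)%E.
  apply: eq_integral => y _ /=.
  have [Gp|G0] := ltP 0 (tensor_weight k p y).
    rewrite (_ : xsection _ y = `[0, 0 + a * tensor_weight k p y]%classic).
      by apply: lebesgue_measure_itv_len; rewrite mulr_ge0 // tensor_weight_ge0.
    apply/seteqP; split => t; rewrite /xsection /= inE /= in_itv /= add0r.
      by case.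
    by split.
  have -> : tensor_weight k p y = 0.
    by apply/eqP; rewrite eq_le G0 tensor_weight_ge0.
  rewrite mulr0 (_ : xsection _ y = set0) ?measure0 //.
  apply/seteqP; split => t //; rewrite /xsection /= inE /=.
  by case => h; move: G0; rewrite leNgt h.
under eq_integral do rewrite EFinM.
rewrite ge0_integralZl_EFin ?integral_tensor_weight -?EFinM //.
- by move=> y _; rewrite lee_fin tensor_weight_ge0.
- exact/measurable_EFinP/measurable_tensor_weight.
Qed.

Lemma tensor_weight_box k p y : 0 < tensor_weight k p y -> exists l : nat -> R,
  [/\ forall i, (i <= p)%N -> Dk R k (l i), tbox p (fun _ => 0) l y &
      \prod_(i < p.+1) l i = (tensor_weight k p y)^-1].
Proof.
have side j t : t \in dyadic_itv j -> 0 <= t <= 0 + ((2:R) ^+ j)^-1.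
  rewrite /dyadic_itv inE /= in_itv /= add0r => /andP[/ltW + ->].
  by rewrite andbT; apply: le_trans; rewrite invr_ge0 exprn_ge0.
elim: p y => [|p IH] y /=.
  move=> /dyadic_weight_gt0 [j [jk tj ->]].
  exists (fun _ => ((2:R) ^+ j)^-1); split; last by rewrite big_ord1.
  - by move=> i _; exists j; split => //; exact: ltnW.
  - exact: side.
move=> Gp.
have Gpos : 0 < tensor_weight k p y.1.
  by rewrite lt_def tensor_weight_ge0 andbT; apply: contraTneq Gp => ->; rewrite mul0r ltxx.
have wpos : 0 < dyadic_weight k y.2.
  by rewrite lt_def dyadic_weight_ge0 andbT; apply: contraTneq Gp => ->; rewrite mulr0 ltxx.
have [l [Dl yl pl]] := IH _ Gpos.
have [j [jk tj wj]] := @dyadic_weight_gt0 k y.2 wpos.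
exists (fun i => if i == p.+1 then ((2:R) ^+ j)^-1 else l i); split.
- move=> i; rewrite leq_eqVlt; case: eqP => [_ _|_ /= ip]; last exact: Dl.
  by exists j; split => //; exact: ltnW.
- split; last by rewrite eqxx; exact: side.
  rewrite (@eq_tbox _ p _ _ l) // => i ip.
  by rewrite ifF //; apply/negbTE; rewrite neq_ltn ltnS ip.
- rewrite big_ord_recr /= eqxx (eq_bigr (fun i : 'I_p.+1 => l i)).
    by rewrite pl wj invfM.
  by move=> i _; rewrite ifF //; apply/negbTE; rewrite neq_ltn ltn_ord.
Qed.

End DyadicWeight.

Section TestFunction.
Variable R : realType.

Definition weak_Lphi_with n (F : set (nat -> R)) (Phi : R -> R) (C : R) : Prop :=
  forall (lam : R) (f : car (Rn R n) -> R), 0 < lam ->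
    measurable_fun setT f ->
    (leb R n).-integrable setT (fun x => (Phi `|f x|)%:E) ->
    (leb R n [set x | lam%:E < maxop R n F f x] <=
      \int[leb R n]_x (Phi (C * `|f x| / lam))%:E)%E.

Lemma orlicz_ge0 (Phi : R -> R) x : orlicz Phi -> 0 <= x -> 0 <= Phi x.
Proof. by case=> Phi0 Phi_mono _ x0; rewrite -Phi0; exact: Phi_mono. Qed.

Lemma maxop_ge_average n (F : set (nat -> R)) f (l a : nat -> R) x :
  F l -> trect n a l x ->
  ((fine (leb R n (srect n l)))^-1%:E *
     \int[leb R n]_(y in trect n a l) (`|f y|)%:E <= maxop R n F f x)%E.
Proof. by move=> Fl xl; apply: ereal_sup_ubound; exists l, a. Qed.

Lemma alpha_gt0 n k : 0 < alpha R n k.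
Proof. by rewrite invr_gt0 exprn_gt0. Qed.

Variables (p k : nat).
Let n := p.+2.
Let a := alpha R n k.
Let Z : R := 2 ^+ (k * p.+1).
Let Q := tbox p.+1 (fun _ => 0) (fun i => if i == p.+1 then a else (2 ^+ k)^-1).
Let f y : R := 2 * Z * \1_Q y.

Let Z_gt0 : 0 < Z. Proof. exact: exprn_gt0. Qed.

Lemma measure_Q : meas (Rsp R p.+1) Q = (a / Z)%:E.
Proof.
rewrite Rsp_measure_tbox; last first.
  by move=> i _; case: ifP => _; [exact/ltW/alpha_gt0|by rewrite invr_ge0 exprn_ge0].
rewrite big_ord_recr /= eqxx mulrC /Z exprM.
rewrite (eq_bigr (fun _ => ((2:R) ^+ k)^-1)) ?prodr_const ?card_ord ?exprVn // => i _.
by rewrite ifF //; apply/negbTE; rewrite neq_ltn ltn_ord.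
Qed.

Lemma subgraph_dyadic_rect x : subgraph R k p a x -> exists L : nat -> R,
  [/\ calR R n L, tbox p.+1 (fun _ => 0) L x, Q `<=` tbox p.+1 (fun _ => 0) L &
      meas (Rsp R p.+1) (tbox p.+1 (fun _ => 0) L) = a%:E].
Proof.
move=> [Gp xG].
have [l [Dl xl pl]] := @tensor_weight_box R k p x.1 Gp.
have Dl_ge i : (i <= p)%N -> ((2:R) ^+ k)^-1 <= l i /\ 0 <= l i /\ l i <= 1.
  move=> /Dl [j [jk ->]]; split; first exact: le_inv_pow2.
  split; first by rewrite invr_ge0 exprn_ge0.
  by have := @le_inv_pow2 R _ j (leq0n j); rewrite expr0 invr1.
set P := \prod_(i < p.+1) l i.
have P0 : 0 < P by rewrite /P pl invr_gt0.
have P1 : P <= 1 by apply: prodr_ile1 => i _; have := Dl_ge i (ltn_ord i); lra.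
pose L i := if i == p.+1 then a / P else l i.
have Ll i : (i <= p)%N -> L i = l i.
  by move=> ip; rewrite /L ifF //; apply/negbTE; rewrite neq_ltn ltnS ip.
have PL : \prod_(i < p.+1) L i = P by apply: eq_bigr => i _; apply: Ll; rewrite -ltnS.
exists L; split.
- exists k => //; split; last by rewrite /L eqxx PL.
  by move=> i ip; rewrite Ll //; exact: Dl.
- split; first by rewrite (@eq_tbox _ p _ _ l).
  by rewrite /L eqxx add0r /P pl invrK.
- apply: subset_tbox => i; rewrite /L; case: ifP => [_ _|/negbT ne ip].
    by rewrite ler_pdivlMr // ler_piMr // ltW // alpha_gt0.
  by case: (Dl_ge i); move: ip; rewrite leq_eqVlt (negbTE ne).
- rewrite Rsp_measure_tbox; last first.
    move=> i; rewrite leq_eqVlt => /orP[/eqP ->|ip].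
      by rewrite /L eqxx divr_ge0 // ltW // alpha_gt0.
    by rewrite Ll //; have := Dl_ge i ip; lra.
  by rewrite big_ord_recr /= PL /L eqxx mulrC divfK // gt_eqF.
Qed.

Lemma integral_indic_Q (c : R) (D : set (car (Rsp R p.+1))) :
  measurable D -> Q `<=` D -> 0 <= c ->
  (\int[meas (Rsp R p.+1)]_(y in D) (c * \1_Q y)%:E = (c * (a / Z))%:E)%E.
Proof.
move=> mD QD c0; under eq_integral do rewrite EFinM.
rewrite ge0_integralZl_EFin //; last first.
  by apply/measurable_EFinP; apply: measurable_indic; exact: measurable_tbox.
by rewrite integral_indic ?setIidl ?measure_Q -?EFinM //; exact: measurable_tbox.
Qed.

Lemma subgraph_sub_level :
  subgraph R k p a `<=` [set x | (1%:E < maxop R n (calR R n) f x)%E].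
Proof.
move=> x /subgraph_dyadic_rect [L [RL xL QL mL]].
apply: (lt_le_trans _ (@maxop_ge_average n _ f _ _ x RL xL)).
have -> : (\int[leb R n]_(y in trect n (fun _ => 0%R) L) (`|f y|)%:E =
           (2 * Z * (a / Z))%:E)%E.
  rewrite -(@integral_indic_Q (2 * Z) _ (measurable_tbox _ _ _ _) QL); last exact/ltW/mulr_gt0/Z_gt0.
  by apply: eq_integral => y _; rewrite ger0_norm // mulr_ge0 // ltW // mulr_gt0 // Z_gt0.
rewrite [leb R n _]mL /= -EFinM lte_fin.
have a0 : a != 0 by rewrite gt_eqF // alpha_gt0.
have Z0 : Z != 0 by rewrite gt_eqF // Z_gt0.
have -> : a^-1 * (2 * Z * (a / Z)) = 2 by field; rewrite Z0 a0.
by rewrite ltr1n.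
Qed.

Lemma Phi_f (Phi : R -> R) (c : R) y : orlicz Phi ->
  Phi (c * `|f y|) = Phi (c * (2 * Z)) * \1_Q y.
Proof.
move=> oPhi; rewrite /f indicE; case: (y \in Q).
  by rewrite !mulr1 ger0_norm // ltW // mulr_gt0 // Z_gt0.
by case: oPhi => Phi0 _ _; rewrite !mulr0 normr0 mulr0 Phi0.
Qed.

Lemma integral_Phi_f (Phi : R -> R) (c : R) : orlicz Phi -> 0 <= c ->
  (\int[meas (Rsp R p.+1)]_y (Phi (c * `|f y|))%:E =
   (Phi (c * (2 * Z)) * (a / Z))%:E)%E.
Proof.
move=> oPhi c0; under eq_integral do rewrite Phi_f //.
apply: integral_indic_Q => //; apply: orlicz_ge0 => //.
by rewrite mulr_ge0 // ltW // mulr_gt0 // Z_gt0.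
Qed.

Lemma weak_Lphi_with_lower_bound (Phi : R -> R) (C : R) : orlicz Phi -> 0 < C ->
  weak_Lphi_with n (calR R n) Phi C -> Z * (k%:R / 2) ^+ p.+1 <= Phi (C * (2 * Z)).
Proof.
move=> oPhi C0 weakC.
have mQ : measurable_fun setT (\1_Q : _ -> R).
  by apply: measurable_indic; exact: measurable_tbox.
have mf : measurable_fun setT f by apply: measurable_funM => //; exact: measurable_cst.
have intf : (leb R n).-integrable setT (fun x => (Phi `|f x|)%:E).
  apply/integrableP; split.
    apply/measurable_EFinP; under eq_fun do rewrite -[`|_|]mul1r Phi_f //.
    by apply: measurable_funM => //; exact: measurable_cst.
  rewrite (eq_integral (fun x => (Phi (1 * `|f x|))%:E)); last first.
    by move=> x _; rewrite mul1r gee0_abs // lee_fin orlicz_ge0.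
  by rewrite integral_Phi_f // ltry.
have := weakC 1 f ltr01 mf intf.
under eq_integral do rewrite divr1.
rewrite integral_Phi_f //; last exact: ltW.
move=> level_le.
have := le_trans (@le_Rsp_measure R p.+1 _ _ subgraph_sub_level) level_le.
rewrite measure_subgraph ?lee_fin => [subgraph_le|]; last exact/ltW/alpha_gt0.
have a0 : a != 0 by rewrite gt_eqF // alpha_gt0.
have Z0 : Z != 0 by rewrite gt_eqF // Z_gt0.
have -> : Phi (C * (2 * Z)) = Phi (C * (2 * Z)) * (a / Z) * (Z / a).
  by field; rewrite Z0 a0.
have -> : Z * (k%:R / 2) ^+ p.+1 = a * (k%:R / 2) ^+ p.+1 * (Z / a).
  by field; rewrite a0.
by rewrite ler_pM2r // divr_gt0 // ?Z_gt0 ?alpha_gt0.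
Qed.

End TestFunction.

Section Growth.
Variable R : realType.

Lemma Phid_le_expR d (T K : R) : 0 < T -> 1 <= K -> T <= expR K ->
  Phid R d T <= 2 * K ^+ d * T.
Proof.
move=> T0 K1 TK.
have lp0 : 0 <= logp T by rewrite /logp le_max lexx orbT.
have lpK : logp T <= K.
  by rewrite /logp ge_max (le_trans ler01 K1) andbT -(expRK K) ler_ln ?posrE ?expR_gt0.
have lpKd : logp T ^+ d <= K ^+ d by rewrite lerXn2r // nnegrE // (le_trans ler01 K1).
have Kd1 := exprn_ege1 d K1.
by rewrite /Phid mulrC ler_pM2r //; lra.
Qed.

Lemma pow2_le_expR (j : nat) : (2 : R) ^+ j <= expR j%:R.
Proof.
rewrite -[j%:R]mulr1 expRM_natl lerXn2r ?nnegrE ?expR_ge0 //.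
by have := expR_ge1Dx (1 : R); lra.
Qed.

(* For T = 2 C 2^(km) and k >= 2 C, log T <= k (m + 1), hence
   Phi_m(T) <= 2 (k (m + 1))^m T. *)
Lemma Phid_ratio_ge (m k : nat) (Phi : R -> R) (C : R) : 0 < C -> (0 < k)%N ->
  2 * C <= k%:R ->
  2 ^+ (k * m) * (k%:R / 2) ^+ m <= Phi (C * (2 * 2 ^+ (k * m))) ->
  (4 * C * 2 ^+ m * m.+1%:R ^+ m)^-1 <=
    Phi (C * (2 * 2 ^+ (k * m))) / Phid R m (C * (2 * 2 ^+ (k * m))).
Proof.
set Z : R := 2 ^+ (k * m); set T := C * (2 * Z) => C0 k0 kC PhiT.
have Z0 : 0 < Z by rewrite exprn_gt0.
have T0 : 0 < T by rewrite mulr_gt0 // mulr_gt0.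
set K : R := (k * m.+1)%:R.
have K1 : 1 <= K by rewrite ler1n muln_gt0 k0.
have TK : T <= expR K.
  rewrite /K mulnS natrD expRD /T mulrA [C * 2]mulrC.
  apply: ler_pM; [lra|exact: ltW| |exact: pow2_le_expR].
  by apply: (le_trans kC); have := expR_ge1Dx (k%:R : R); lra.
have PhidT := @Phid_le_expR m T K T0 K1 TK.
have Phid0 : 0 < Phid R m T.
  by rewrite /Phid mulr_gt0 // ltr_pwDl // exprn_ge0 // /logp le_max lexx orbT.
have eps0 : 0 < (4 * C * 2 ^+ m * m.+1%:R ^+ m)^-1.
  by rewrite invr_gt0 !mulr_gt0 // exprn_gt0.
rewrite ler_pdivlMr //; apply: le_trans PhiT.
apply: le_trans (ler_wpM2l (ltW eps0) PhidT) _.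
have hC : C != 0 by rewrite gt_eqF.
have hm : (m.+1%:R : R) ^+ m != 0 by rewrite expf_neq0 // pnatr_eq0.
have h2 : (2 : R) ^+ m != 0 by rewrite expf_neq0 // pnatr_eq0.
suff -> : (4 * C * 2 ^+ m * m.+1%:R ^+ m)^-1 * (2 * K ^+ m * T) =
          Z * (k%:R / 2) ^+ m by [].
by rewrite /T /K natrM exprMn expr_div_n; field; rewrite hC hm h2.
Qed.

Lemma dyadic_scale_cvgry (m : nat) (C : R) : (0 < m)%N -> 0 < C ->
  (fun k : nat => C * (2 * 2 ^+ (k * m))) @ \oo --> +oo.
Proof.
move=> m0 C0; apply/cvgryPge => A; near=> k.
have kA : A / (2 * C) <= k%:R by near: k; exact: nbhs_infty_ger.
have k2 : (k%:R : R) <= 2 ^+ (k * m).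
  rewrite -natrX ler_nat (leq_trans (ltnW (ltn_expl k (ltnSn 1)))) //.
  by rewrite leq_pexp2l // leq_pmulr.
rewrite ler_pdivrMr ?mulr_gt0 // in kA.
rewrite mulrA [C * 2]mulrC (le_trans kA) // [_ * (2 * C)]mulrC ler_pM2l //.
exact: mulr_gt0.
Unshelve. all: by end_near.
Qed.

Lemma dyadic_growth_not_little_o (m : nat) (Phi : R -> R) (C : R) :
  (0 < m)%N -> 0 < C ->
  (forall k : nat, 2 ^+ (k * m) * (k%:R / 2) ^+ m <= Phi (C * (2 * 2 ^+ (k * m)))) ->
  ~ little_o_infty Phi (Phid R m).
Proof.
move=> m0 C0 Phi_ge Phi_o.
have eps0 : 0 < (4 * C * 2 ^+ m * m.+1%:R ^+ m)^-1.
  by rewrite invr_gt0 !mulr_gt0 // exprn_gt0.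
have small := cvgr0_norm_lt _ (cvg_comp _ _ (dyadic_scale_cvgry m C m0 C0) Phi_o) _ eps0.
near \oo => k.
have k0 : (0 < k)%N by near: k; exact: nbhs_infty_ge.
have kC : 2 * C <= k%:R by near: k; exact: nbhs_infty_ger.
have := @Phid_ratio_ge m k Phi C C0 k0 kC (Phi_ge k); rewrite leNgt => /negP; apply.
apply: le_lt_trans (ler_norm _) _; near: k; exact: small.
Unshelve. all: by end_near.
Qed.

End Growth.

Local Close Scope classical_set_scope.

Theorem mainTheorem4 (R : realType) (n : nat) : (2 <= n)%N ->
  forall Phi : R -> R, orlicz Phi -> little_o_infty Phi (Phid R n.-1) ->
  ~ weak_Lphi n (calR R n) Phi.
Proof.
case: n => [|[|p]] // _ Phi oPhi Phi_o [C [C0 weakC]].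
apply: (@dyadic_growth_not_little_o R p.+1 Phi C (ltn0Sn p) C0 _ Phi_o) => k.
exact: (@weak_Lphi_with_lower_bound R p k Phi C oPhi C0 weakC).
Qed.
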